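(* Fix $\mathbf d=(d_1,\ldots,d_n)$ of positive integers, $|\mathbf d|=\sum d_i$. In the projective space $\mathbb{P}^{|\mathbf d|}$ with homogeneous coordinates $(\alpha,z)=((\alpha_{i,j})_{1\le i\le n,1\le j\le d_i},z)$, consider the system consisting of $h_1=\cdots=h_{|\mathbf d|-1}=0$ and $z^{|\mathbf d|}=\prod_{i,j}\alpha_{i,j}$, where $h_k$ is the coefficient of $t^k$ in $\tilde f(\mathbf x(t))$ for $\tilde f=\left(\prod_{i=1}^n(x_i+1)\right)-1$ and $x_i(t)=\left(\prod_{j=1}^{d_i}(\alpha_{i,j}t+1)\right)-1$. Then this system has exactly $|\mathbf d|!$ solutions, each of them simple (of multiplicity one).
   Context: This solution set is the fibre over the coefficient vector of $\tilde f$ of the projection from the incidence variety $\{(\alpha,z,\mathbf c): h_k(\mathbf c,\alpha)=0 \ (1\le k\le|\mathbf d|-1),\ z^{|\mathbf d|}=\prod\alpha_{i,j}\}$ to the space of coefficient vectors $\mathbf c$ of $f$. *)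

From HB Require Import structures.
From mathcomp Require Import all_boot all_order all_algebra.
From mathcomp Require Import mpoly.
Set Implicit Arguments. Unset Strict Implicit. Unset Printing Implicit Defensive.
Import Order.TTheory GRing.Theory Num.Theory.
Local Open Scope ring_scope.

Section Lemma35Defs.
Variable F : numClosedFieldType.
Variables (n : nat) (d : 'I_n -> nat).

Definition dsum : nat := (\sum_(i < n) d i)%N.

(* Homogeneous coordinates of P^{|d|}: |d|+1 variables indexed by 'I_(dsum.+1).
   alpha_{i,j} (0-based i < n, j < d i) is variable number (d_0+...+d_{i-1}) + j,
   and z is the last variable (number dsum). *)
Definition alpha_idx (i : 'I_n) (j : 'I_(d i)) : 'I_(dsum.+1) :=
  inord ((\sum_(i' < n | (i' < i)%N) d i') + j)%N.
Definition z_idx : 'I_(dsum.+1) := ord_max.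

Definition MP := {mpoly F[dsum.+1]}.

Definition alpha (i : 'I_n) (j : 'I_(d i)) : MP := 'X_(alpha_idx j).
Definition zvar : MP := 'X_z_idx.

Definition xt (i : 'I_n) : {poly MP} :=
  (\prod_(j < d i) ((alpha j)%:P * 'X + 1)) - 1.

Definition ftilde_xt : {poly MP} := (\prod_(i < n) (xt i + 1)) - 1.

Definition h (k : nat) : MP := ftilde_xt`_k.

(* The system: equations indexed by k < |d|: for k < |d|-1 it is h_{k+1} = 0,
   and the last one (k = |d|-1) is z^{|d|} - prod_{i,j} alpha_{i,j} = 0. *)
Definition sys (k : 'I_dsum) : MP :=
  if (k : nat) == dsum.-1 then zvar ^+ dsum - \prod_(i < n) \prod_(j < d i) alpha j
  else h k.+1.

(* a point of F^{|d|+1} (representative of a projective point) *)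
Definition pt_eval (v : 'rV[F]_(dsum.+1)) (p : MP) : F := p.@[fun l => v ord0 l].

Definition is_solution (v : 'rV[F]_(dsum.+1)) : Prop :=
  v != 0 /\ forall k : 'I_dsum, pt_eval v (sys k) = 0.

Definition proportional (v w : 'rV[F]_(dsum.+1)) : Prop :=
  exists2 c : F, c != 0 & w = c *: v.

Definition jacobian (v : 'rV[F]_(dsum.+1)) : 'M[F]_(dsum, dsum.+1) :=
  \matrix_(k < dsum, l < dsum.+1) pt_eval v (mderiv l (sys k)).

(* a solution of a system of |d| homogeneous equations in P^{|d|} is simple
   (multiplicity one) iff the Jacobian has full rank |d| there *)
Definition simple_solution (v : 'rV[F]_(dsum.+1)) : Prop :=
  is_solution v /\ \rank (jacobian v) = dsum.

End Lemma35Defs.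

(* Numbering the alpha_(i,j) consecutively as a_0, ..., a_(N-1) (N = |d|), we get
   f~(x(t)) + 1 = P(t) := \prod_m (a_m t + 1), so (a, z) is a solution iff
   P = 1 + z^N t^N.  Then z <> 0: otherwise P = 1 has no root, while every
   a_m <> 0 would give the root -1/a_m, so the point would be 0.  Scaling to z = 1,
   the -1/a_m are the N distinct roots of t^N + 1 in some order, whence exactly N!
   projective solutions.  At a solution, the derivative in a_l of the coefficient
   of t^(k+1) in P is the coefficient of t^k in P / (a_l t + 1), which is
   (1 - (- a_l t)^N) / (1 + a_l t), i.e. (- a_l)^k; so the Jacobian contains the
   invertible Vandermonde matrix of the distinct - a_l, and the z-derivative
   N z^(N-1) of the last equation brings its rank to N. *)

From HB Require Import structures.
From mathcomp Require Import all_boot all_order all_algebra.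
From mathcomp Require Import mpoly.
From mathcomp Require Import zify.
Set Implicit Arguments. Unset Strict Implicit. Unset Printing Implicit Defensive.
Import Order.TTheory GRing.Theory Num.Theory.
Local Open Scope ring_scope.

Lemma big_block_offset (R : Type) (idx : R) (op : Monoid.com_law idx) n
    (d : 'I_n -> nat) (F : nat -> R) :
  \big[op/idx]_(i < n) \big[op/idx]_(j < d i) F (\sum_(i' < n | (i' < i)%N) d i' + j)%N
  = \big[op/idx]_(m < \sum_(i < n) d i) F m.
Proof.
elim: n d F => [|n IH] d F; first by rewrite !big_ord0.
rewrite big_ord_recl big_ord_recl big_split_ord; congr (op _ _).
  by apply: eq_bigr => j _; rewrite big_pred0.
rewrite -(IH (fun i => d (lift ord0 i)) (fun m => F (d ord0 + m)%N)).
apply: eq_bigr => i _; apply: eq_bigr => j _; congr F.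
by rewrite big_mkcond big_ord_recl /= [in RHS]big_mkcond addnA.
Qed.

Section Derivation.
Variables (R : comNzRingType) (D : R -> R).
Hypothesis DM : forall x y, D (x * y) = D x * y + x * D y.

Lemma derivation1 : D 1 = 0.
Proof.
have := DM 1 1; rewrite !mulr1 mul1r => /eqP.
by rewrite -subr_eq0 opprD addrA subrr sub0r oppr_eq0 => /eqP.
Qed.

Lemma derivationX x k : D (x ^+ k.+1) = (x ^+ k * D x) *+ k.+1.
Proof.
elim: k => [|k IH]; first by rewrite expr0 mul1r.
by rewrite exprS DM IH mulrnAr mulrA -exprS (mulrC (D x)) -mulrS.
Qed.

Lemma derivation_prod_eq0 (I : Type) (r : seq I) (P : pred I) (f : I -> R) :
  (forall i, P i -> D (f i) = 0) -> D (\prod_(i <- r | P i) f i) = 0.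
Proof.
move=> Df0; apply: (big_ind (fun x => D x = 0)) => // [|x y Dx Dy].
  exact: derivation1.
by rewrite DM Dx Dy mul0r mulr0 addr0.
Qed.

Lemma derivation_prod1 (I : finType) (f : I -> R) (l : I) :
  (forall i, i != l -> D (f i) = 0) ->
  D (\prod_i f i) = D (f l) * \prod_(i | i != l) f i.
Proof. by move=> Df0; rewrite (bigD1 l) //= DM derivation_prod_eq0 // mulr0 addr0. Qed.
End Derivation.

Definition lacunary (F : nzRingType) (p : {poly F}) (N : nat) :=
  forall k, (0 < k < N)%N -> p`_k = 0.

Lemma size_lin_factor (F : nzRingType) (c : F) : (size (c%:P * 'X + 1)%R <= 2)%N.
Proof. by rewrite -polyC1 size_MXaddC; case: ifP => // _; rewrite ltnS size_polyC leq_b1. Qed.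

Section LinearFactors.
Variables (F : fieldType) (a : nat -> F).

Definition lin_prod (M : nat) : {poly F} := \prod_(m < M) ((a m)%:P * 'X + 1).

Lemma size_lin_prod M : (size (lin_prod M) <= M.+1)%N.
Proof.
elim: M => [|M IH]; first by rewrite /lin_prod big_ord0 size_poly1.
rewrite /lin_prod big_ord_recr /= -/(lin_prod M).
apply: leq_trans (size_polyMleq _ _) _.
by rewrite -subn1 leq_subLR add1n -(addn2 M.+1) leq_add ?size_lin_factor.
Qed.

Lemma coef_lin_prod_top M : (lin_prod M)`_M = \prod_(m < M) a m.
Proof.
elim: M => [|M IH]; first by rewrite /lin_prod !big_ord0 coef1.
rewrite /lin_prod !big_ord_recr /= -/(lin_prod M) mulrDr mulr1 coefD mulrA coefMX /=.
by rewrite coefMC IH [_`_M.+1]nth_default ?addr0 ?size_lin_prod.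
Qed.

Lemma coef0_lin_prod M : (lin_prod M)`_0 = 1.
Proof. by rewrite coef0_prod big1 // => m _; rewrite coefD coefMX coef1 add0r. Qed.

Lemma root_lin_prod M (l : 'I_M) : a l != 0 -> root (lin_prod M) (- (a l)^-1).
Proof.
move=> al0; rewrite /root /lin_prod horner_prod (bigD1 l) //= !hornerE.
by rewrite mulrN mulfV // addNr mul0r.
Qed.

Variable N : nat.
Hypotheses (N_gt0 : (0 < N)%N) (gap : lacunary (lin_prod N) N).

Lemma lin_prod_lacunary : lin_prod N = 1 + (\prod_(m < N) a m)%:P * 'X^N.
Proof.
apply/polyP => k; rewrite coefD coef1 coefCM coefXn.
have [k_lt|k_gt|->] := ltngtP k N.
- rewrite mulr0 addr0; case: k k_lt => [|k] k_lt; first exact: coef0_lin_prod.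
  exact: gap.
- rewrite (gtn_eqF (leq_ltn_trans (leq0n N) k_gt)) mulr0 addr0.
  exact/nth_default/(leq_trans (size_lin_prod N)).
- by rewrite coef_lin_prod_top (gtn_eqF N_gt0) add0r mulr1.
Qed.

Lemma lacunary_prod_eq0 : \prod_(m < N) a m = 0 -> forall m : 'I_N, a m = 0.
Proof.
move=> prod0 m; apply/eqP/negP => /negP am0.
by have := root_lin_prod am0; rewrite lin_prod_lacunary prod0 rootE !hornerE oner_eq0.
Qed.

Lemma lacunary_prodE (l : 'I_N) : a l != 0 -> \prod_(m < N) a m = - (- a l) ^+ N.
Proof.
move=> al0; have := root_lin_prod al0; rewrite lin_prod_lacunary rootE !hornerE.
set c := \prod_(m < N) a m; set x := - (a l)^-1 => /eqP root_x.
have inv : x ^+ N * (- a l) ^+ N = 1 by rewrite -exprMn mulrNN mulVf ?expr1n.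
by rewrite -[c]mulr1 -inv mulrA -[c * _](addKr 1) root_x addr0 mulN1r.
Qed.

Hypothesis prod_neq0 : \prod_(m < N) a m != 0.

Let factor_neq0 (l : 'I_N) : a l != 0.
Proof. by move/prodf_neq0: prod_neq0 => /(_ l isT). Qed.

Definition lin_cofactor (l : 'I_N) : {poly F} :=
  \prod_(m < N | m != l) ((a m)%:P * 'X + 1).

Lemma lin_cofactorE (l : 'I_N) : lin_cofactor l = \poly_(k < N) (- a l) ^+ k.
Proof.
have lin_neq0 : (a l)%:P * 'X + 1 != 0.
  by rewrite -size_poly_eq0 -polyC1 size_MXaddC oner_eq0 andbF.
apply: (mulfI lin_neq0); have -> : ((a l)%:P * 'X + 1) * lin_cofactor l = lin_prod N.
  by rewrite /lin_prod (bigD1 l).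
rewrite lin_prod_lacunary (lacunary_prodE (factor_neq0 l)).
set y := (- a l)%:P * 'X.
have -> : \poly_(k < N) (- a l) ^+ k = \sum_(k < N) y ^+ k.
  by rewrite poly_def; apply: eq_bigr => k _; rewrite /y exprMn -rmorphXn mul_polyC.
have -> : (a l)%:P * 'X + 1 = - (y - 1) by rewrite /y polyCN mulNr opprB opprK addrC.
by rewrite mulNr -subrX1 opprB /y exprMn -rmorphXn polyCN mulNr.
Qed.

Lemma lacunary_inj : N%:R != 0 :> F -> injective (fun l : 'I_N => a l).
Proof.
move=> N_neq0 l l' a_eq; apply/eqP; apply: contraTT N_neq0 => l_neq; rewrite negbK.
have : (lin_cofactor l).[- (a l')^-1] = 0.
  rewrite horner_prod (bigD1 l') 1?eq_sym //= !hornerE.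
  by rewrite mulrN mulfV ?factor_neq0 // addNr mul0r.
rewrite lin_cofactorE horner_poly -a_eq (eq_bigr (fun=> 1)) => [|k _].
  by rewrite sumr_const card_ord => ->.
by rewrite -exprMn mulrNN mulfV ?expr1n ?factor_neq0.
Qed.
End LinearFactors.

Lemma lin_prod_scale (F : fieldType) (a b : nat -> F) (c : F) M :
  (forall m : 'I_M, b m = a m * c) -> lin_prod b M = lin_prod a M \Po (c%:P * 'X).
Proof.
move=> b_eq; rewrite /lin_prod (rmorph_prod (comp_poly (c%:P * 'X))).
apply: eq_bigr => m _ /=.
by rewrite comp_polyD comp_polyM comp_polyC comp_polyX -polyC1 comp_polyC b_eq polyCM mulrA.
Qed.

Lemma Vandermonde_unitmx (F : fieldType) n (b : 'rV[F]_n) :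
  injective (b 0) -> Vandermonde n b \in unitmx.
Proof.
move=> b_inj; rewrite unitmxE det_Vandermonde unitfE.
apply/prodf_neq0 => i _; apply/prodf_neq0 => j ij; rewrite subr_eq0 (inj_eq b_inj).
by rewrite eq_sym neq_ltn ij.
Qed.

Lemma mderivXU (R : nzRingType) n (i l : 'I_n) :
  mderiv l ('X_i : {mpoly R[n]}) = (i == l)%:R.
Proof.
rewrite mderivX mnm1E; case: eqP => [->|_]; last by rewrite scale0r.
by rewrite -[X in (X - _)%MM]add0m addmK scale1r mpolyX0.
Qed.

Section SystemN.
Variables (F : numClosedFieldType) (N : nat).
Local Notation MP := {mpoly F[N.+1]}.
Implicit Types (v : 'rV[F]_N.+1) (s : seq F).

Definition varN (m : nat) : MP := 'X_(inord m).
Definition prodN : {poly MP} := \prod_(m < N) ((varN m)%:P * 'X + 1).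
(* sys with the alpha_(i,j) renumbered 0, ..., N - 1; it only depends on N = |d|. *)
Definition sysN (k : 'I_N) : MP :=
  if (k : nat) == N.-1 then 'X_ord_max ^+ N - \prod_(m < N) varN m else prodN`_k.+1.

Definition alphaN v (m : nat) : F := v 0 (inord m).
Definition solutionN v := v != 0 /\ forall k, meval (v 0) (sysN k) = 0.
Definition jacobianN v : 'M[F]_(N, N.+1) :=
  \matrix_(k, l) meval (v 0) (mderiv l (sysN k)).

(* The default value 1 of nth puts 1 in the z-coordinate. *)
Definition rowN s : 'rV[F]_N.+1 := \row_(j < N.+1) nth 1 s j.

Definition enumerationN (S : seq 'rV[F]_N.+1) :=
  [/\ size S = N`!,
      forall v, v \in S -> solutionN v /\ \rank (jacobianN v) = N,
      forall i j, (i < size S)%N -> (j < size S)%N ->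
        (exists2 c, c != 0 & nth 0 S j = c *: nth 0 S i) -> i = j
    & forall v, solutionN v -> exists2 w, w \in S & exists2 c, c != 0 & v = c *: w].

Let inordNK (m : 'I_N) : (inord m : 'I_N.+1) = m :> nat.
Proof. exact/inordK/leqW. Qed.

Lemma map_meval_prod v (P : pred 'I_N) :
  map_poly (meval (v 0)) (\prod_(m < N | P m) ((varN m)%:P * 'X + 1)) =
  \prod_(m < N | P m) ((alphaN v m)%:P * 'X + 1).
Proof.
rewrite rmorph_prod; apply: eq_bigr => m _.
by rewrite rmorphD rmorphM /= map_polyC map_polyX rmorph1 /= mevalXU.
Qed.

Lemma meval_sysN v k : meval (v 0) (sysN k) =
  if (k : nat) == N.-1 then v 0 ord_max ^+ N - \prod_(m < N) alphaN v m
  else (lin_prod (alphaN v) N)`_k.+1.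
Proof.
rewrite /sysN; case: ifP => _; last by rewrite /lin_prod -map_meval_prod coef_map.
by rewrite rmorphB rmorphXn rmorph_prod /= mevalXU; under eq_bigr do rewrite mevalXU.
Qed.

Lemma map_mderivM l (p q : {poly MP}) :
  map_poly (mderiv l) (p * q) = map_poly (mderiv l) p * q + p * map_poly (mderiv l) q.
Proof.
apply/polyP => i; rewrite coef_map coefD !coefM raddf_sum -big_split /=.
by apply: eq_bigr => j _; rewrite mderivM !coef_map.
Qed.

Lemma map_mderivD l (p q : {poly MP}) :
  map_poly (mderiv l) (p + q) = map_poly (mderiv l) p + map_poly (mderiv l) q.
Proof. by apply/polyP => i; rewrite coef_map !coefD raddfD !coef_map. Qed.

Lemma map_mderiv_lin l m :
  map_poly (mderiv l) ((varN m)%:P * 'X + 1) = (mderiv l (varN m))%:P * 'X.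
Proof.
have DX : map_poly (mderiv l) 'X = 0 :> {poly MP}.
  apply/polyP => i; rewrite coef_map coefX coef0.
  by case: (i == 1)%N; [exact: derivation1 (@mderivM _ F l) | exact: raddf0].
by rewrite map_mderivD map_mderivM DX (derivation1 (map_mderivM l)) mulr0 !addr0 map_polyC.
Qed.

Lemma mderiv_varN_max (m : 'I_N) : mderiv ord_max (varN m) = 0.
Proof.
rewrite /varN mderivXU; have -> : (inord m == ord_max :> 'I_N.+1) = false.
  by rewrite -val_eqE /= inordNK ltn_eqF.
by rewrite mulr0n.
Qed.

Lemma map_mderiv_prodN (l : 'I_N) :
  map_poly (mderiv (inord l)) prodN = 'X * \prod_(m < N | m != l) ((varN m)%:P * 'X + 1).
Proof.
have inord_eq (m : 'I_N) : (inord m == inord l :> 'I_N.+1) = (m == l).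
  by rewrite -val_eqE /= !inordNK.
rewrite (derivation_prod1 (map_mderivM _) (l := l)) => [|m /negbTE m_neq];
  rewrite map_mderiv_lin /varN mderivXU inord_eq.
  by rewrite eqxx mulr1n polyC1 mul1r mulrC.
by rewrite m_neq mulr0n polyC0 mul0r.
Qed.

Lemma jacobianN_alpha v (k l : 'I_N) : (k : nat) != N.-1 ->
  jacobianN v k (inord l) = (lin_cofactor (alphaN v) l)`_k.
Proof.
move=> k_neq; rewrite mxE /sysN (negbTE k_neq) /=.
rewrite -(coef_map (mderiv _)) map_mderiv_prodN -coef_map rmorphM /= map_polyX.
by rewrite map_meval_prod coefXM.
Qed.

Lemma row_eq_alphaN v w : (forall m : 'I_N, alphaN v m = alphaN w m) ->
  v 0 ord_max = w 0 ord_max -> v = w.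
Proof.
move=> alpha_eq z_eq; apply/rowP => j; have [j_lt|j_ge] := ltnP j N.
  by have := alpha_eq (Ordinal j_lt); rewrite /alphaN /= inord_val.
suff -> : j = ord_max by [].
by apply/val_inj/eqP; rewrite /= eqn_leq j_ge -ltnS ltn_ord.
Qed.

Lemma alphaN_rowN s (m : 'I_N) : alphaN (rowN s) m = nth 1 s m.
Proof. by rewrite /alphaN mxE inordNK. Qed.

Lemma rowN_last s : size s = N -> rowN s 0 ord_max = 1.
Proof. by move=> size_s; rewrite mxE nth_default ?size_s. Qed.

Lemma lin_prod_rowN s : size s = N ->
  lin_prod (alphaN (rowN s)) N = \prod_(x <- s) (x%:P * 'X + 1).
Proof.
move=> size_s; rewrite (big_nth 1) size_s big_mkord.
by apply: eq_bigr => m _; rewrite alphaN_rowN.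
Qed.

Lemma scale_rowN_inj s s' c : size s = N -> size s' = N ->
  rowN s' = c *: rowN s -> s' = s.
Proof.
move=> size_s size_s' E.
have c1 : c = 1.
  have := congr1 (fun A : 'rV[F]_N.+1 => A 0 ord_max) E.
  by rewrite [RHS]mxE !rowN_last // mulr1.
apply: (@eq_from_nth _ 1) => [|m]; first by rewrite size_s size_s'.
rewrite size_s' => m_lt; have := congr1 (alphaN^~ (Ordinal m_lt)) E.
by rewrite c1 scale1r !alphaN_rowN.
Qed.

Hypothesis N_gt0 : (0 < N)%N.

Let lastN_lt : (N.-1 < N)%N. Proof. by rewrite ltn_predL. Qed.
Let lastN : 'I_N := Ordinal lastN_lt.

Lemma sysN_zeroP v : (forall k, meval (v 0) (sysN k) = 0) <->
  lacunary (lin_prod (alphaN v) N) N /\ v 0 ord_max ^+ N = \prod_(m < N) alphaN v m.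
Proof.
split => [eqs | [gap z_eq] k]; last first.
  rewrite meval_sysN; case: ifP => [_ | /negbT k_neq]; first by rewrite z_eq subrr.
  by apply: gap; move: (ltn_ord k) k_neq; lia.
split => [k /andP[k_gt0 k_lt] | ].
  have k1_lt : (k.-1 < N)%N by lia.
  have := eqs (Ordinal k1_lt); rewrite meval_sysN /= prednK // ifN //; lia.
by have := eqs lastN; rewrite meval_sysN eqxx => /eqP; rewrite subr_eq0 => /eqP.
Qed.

Lemma solutionN_prod_neq0 v : solutionN v -> \prod_(m < N) alphaN v m != 0.
Proof.
move=> [v_neq0 /sysN_zeroP[gap z_eq]]; apply: contra v_neq0 => /eqP prod0.
apply/eqP/row_eq_alphaN => [m|]; rewrite [RHS]mxE.
  exact: lacunary_prod_eq0 N_gt0 gap prod0 m.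
by move: z_eq; rewrite prod0 => /eqP; rewrite expf_eq0 N_gt0 => /eqP.
Qed.

Lemma solutionN_z_neq0 v : solutionN v -> v 0 ord_max != 0.
Proof.
move=> sol; have := solutionN_prod_neq0 sol; have [_ /sysN_zeroP[_ <-]] := sol.
by rewrite expf_eq0 N_gt0.
Qed.

Lemma solutionN_alpha_inj v : solutionN v -> injective (fun m : 'I_N => alphaN v m).
Proof.
move=> sol; have [_ /sysN_zeroP[gap _]] := sol.
have N_neq0 : N%:R != 0 :> F by rewrite pnatr_eq0 -lt0n.
exact: lacunary_inj N_gt0 gap (solutionN_prod_neq0 sol) N_neq0.
Qed.

Lemma jacobianN_z v (k : 'I_N) :
  jacobianN v k ord_max = if (k : nat) == N.-1 then v 0 ord_max ^+ N.-1 *+ N else 0.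
Proof.
rewrite mxE /sysN; case: ifP => _; last first.
  rewrite -coef_map (derivation_prod_eq0 (map_mderivM _)) ?coef0 ?raddf0 // => m _.
  by rewrite map_mderiv_lin mderiv_varN_max polyC0 mul0r.
rewrite mderivB (derivation_prod_eq0 (@mderivM _ F ord_max)) ?subr0 => [|m _];
  last exact: mderiv_varN_max.
have := derivationX (@mderivM _ F ord_max) 'X_ord_max N.-1; rewrite prednK // => ->.
by rewrite mderivXU eqxx mulr1 rmorphMn rmorphXn /= mevalXU.
Qed.

Lemma jacobianN_rank v : solutionN v -> \rank (jacobianN v) = N.
Proof.
move=> sol; have [_ /sysN_zeroP[gap _]] := sol; have prod_neq0 := solutionN_prod_neq0 sol.
pose b := \row_(l < N) - alphaN v l.
have b_inj : injective (b 0).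
  by move=> l l'; rewrite !mxE => /oppr_inj /(solutionN_alpha_inj sol).
apply/eqP; apply: inj_row_free => u uJ0.
have u_last : u 0 lastN = 0.
  have := congr1 (fun A : 'rV[F]_N.+1 => A 0 ord_max) uJ0.
  rewrite !mxE (bigD1 lastN) //= big1 => [|k k_neq]; last by rewrite jacobianN_z ifN ?mulr0.
  rewrite jacobianN_z eqxx addr0 => /eqP; rewrite mulf_eq0 mulrn_eq0 expf_eq0.
  by rewrite (negbTE (solutionN_z_neq0 sol)) (gtn_eqF N_gt0) andbF !orbF => /eqP.
have uV0 : u *m Vandermonde N b = 0.
  apply/rowP => l; rewrite [RHS]mxE.
  transitivity ((u *m jacobianN v) 0 (inord l)); last by rewrite uJ0 mxE.
  rewrite !mxE; apply: eq_bigr => k _; rewrite [Vandermonde N b k l]mxE [b 0 l]mxE.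
  have [->|k_neq] := eqVneq k lastN; first by rewrite u_last !mul0r.
  by rewrite jacobianN_alpha // lin_cofactorE // coef_poly ltn_ord.
apply/eqP; rewrite -(mulmx_free_eq0 _ (B := Vandermonde N b)) ?uV0 //.
by rewrite row_free_unit Vandermonde_unitmx.
Qed.

Lemma solutionN_rowN s : size s = N ->
  \prod_(x <- s) (x%:P * 'X + 1) = 'X^N + 1 -> solutionN (rowN s).
Proof.
move=> size_s prod_s; have z1 := rowN_last size_s.
split; first by apply/eqP => s0; move: z1; rewrite s0 mxE => /eqP; rewrite eq_sym oner_eq0.
apply/sysN_zeroP; rewrite z1 expr1n -coef_lin_prod_top lin_prod_rowN // prod_s.
rewrite coefD coefXn coef1 eqxx (gtn_eqF N_gt0) addr0; split=> // k /andP[k_gt0 k_lt].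
by rewrite coefD coefXn coef1 (ltn_eqF k_lt) (gtn_eqF k_gt0) addr0.
Qed.

Lemma solutionN_scale_rowN v : solutionN v ->
  exists2 s, size s = N /\ \prod_(x <- s) (x%:P * 'X + 1) = 'X^N + 1
           & v = v 0 ord_max *: rowN s.
Proof.
move=> sol; have [_ /sysN_zeroP[gap z_eq]] := sol; have z_neq0 := solutionN_z_neq0 sol.
set z := v 0 ord_max in z_eq z_neq0 *.
pose s := mkseq (fun m => alphaN v m / z) N.
have size_s : size s = N by rewrite size_mkseq.
exists s; last first.
  apply: row_eq_alphaN => [m|]; last by rewrite [RHS]mxE rowN_last // mulr1.
  have -> : alphaN (z *: rowN s) m = z * alphaN (rowN s) m by rewrite /alphaN mxE.
  by rewrite alphaN_rowN nth_mkseq // mulrC divfK.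
split=> //; rewrite -lin_prod_rowN // (lin_prod_scale (a := alphaN v) (c := z^-1)) => [|m].
  rewrite lin_prod_lacunary // -z_eq comp_polyD -polyC1 !comp_polyC comp_polyM comp_polyC.
  rewrite (rmorphXn (comp_poly _)) /= comp_polyX exprMn mulrA -rmorphXn -polyCM -exprMn.
  by rewrite mulfV // expr1n polyC1 mul1r addrC.
by rewrite alphaN_rowN nth_mkseq.
Qed.

Lemma prod_XnaddC_prod1 s : size s = N ->
  \prod_(x <- s) (x%:P * 'X + 1) = 'X^N + 1 -> \prod_(x <- s) x = 1.
Proof.
move=> size_s prod_s; transitivity (\prod_(m < N) alphaN (rowN s) m).
  by rewrite (big_nth 1) size_s big_mkord; apply: eq_bigr => m _; rewrite alphaN_rowN.
rewrite -coef_lin_prod_top lin_prod_rowN // prod_s.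
by rewrite coefD coefXn coef1 eqxx (gtn_eqF N_gt0) addr0.
Qed.

Lemma prod_XnaddC_uniq s : size s = N ->
  \prod_(x <- s) (x%:P * 'X + 1) = 'X^N + 1 -> uniq s.
Proof.
move=> size_s prod_s; have alpha_inj := solutionN_alpha_inj (solutionN_rowN size_s prod_s).
apply/(uniqP 1) => i j; rewrite !inE size_s => i_lt j_lt nth_eq.
by have := alpha_inj (Ordinal i_lt) (Ordinal j_lt); rewrite !alphaN_rowN => /(_ nth_eq) [].
Qed.

Lemma prod_XnaddC_perm s w : size s = N -> size w = N ->
    \prod_(x <- s) (x%:P * 'X + 1) = 'X^N + 1 ->
    \prod_(x <- w) (x%:P * 'X + 1) = 'X^N + 1 ->
  perm_eq s w.
Proof.
move=> size_s size_w prod_s prod_w.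
have uniq_s := prod_XnaddC_uniq size_s prod_s.
have s_sub_w : {subset s <= w}.
  move=> x xs; have x_neq0 : x != 0.
    apply/eqP => x0; have := prod_XnaddC_prod1 size_s prod_s.
    by rewrite (big_rem x xs) /= x0 mul0r => /eqP; rewrite eq_sym oner_eq0.
  have : root (\prod_(y <- w) (y%:P * 'X + 1)) (- x^-1).
    rewrite prod_w -prod_s /root horner_prod (big_rem x xs) /= !hornerE.
    by rewrite mulrN mulfV // addNr mul0r.
  rewrite /root horner_prod prodf_seq_eq0 => /hasP[y yw]; rewrite !hornerE mulrN.
  by rewrite addrC subr_eq0 eq_sym => /eqP/divr1_eq <-.
have [_ s_eq_w] := uniq_min_size uniq_s s_sub_w (eq_leq (etrans size_w (esym size_s))).
exact: uniq_perm uniq_s (prod_XnaddC_uniq size_w prod_w) s_eq_w.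
Qed.

Lemma prod_XnaddC_exists :
  exists2 w : seq F, size w = N & \prod_(x <- w) (x%:P * 'X + 1) = 'X^N + 1.
Proof.
have [rs q_eq] := closed_field_poly_normal ('X^N + 1%:P : {poly F}).
rewrite lead_coefXnaddC // scale1r in q_eq.
have size_rs : size rs = N.
  have := congr1 (fun p : {poly F} => size p) q_eq.
  by rewrite size_XnaddC // size_prod_XsubC => -[].
have q0 : ('X^N + 1%:P : {poly F}).[0] = 1 by rewrite !hornerE expr0n (gtn_eqF N_gt0) add0r.
have rs_neq0 r : r \in rs -> r != 0.
  move=> r_rs; apply/eqP => r0; have : root ('X^N + 1%:P) r by rewrite q_eq root_prod_XsubC.
  by rewrite /root r0 q0 oner_eq0.
pose w := [seq - r^-1 | r <- rs]; exists w; first by rewrite size_map.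
have prod_w : \prod_(x <- w) (x%:P * 'X + 1) = (\prod_(r <- rs) - r^-1)%:P * ('X^N + 1%:P).
  rewrite q_eq big_map rmorph_prod -big_split /=; apply: eq_big_seq => r r_rs.
  by rewrite mulrBr -polyCM mulNr mulVf ?rs_neq0 // [(-1)%:P]polyCN polyC1 opprK.
have c1 : \prod_(r <- rs) - r^-1 = 1.
  have := congr1 (horner^~ 0) prod_w; rewrite /= hornerM hornerC q0 mulr1 horner_prod.
  by rewrite big1_seq => [/esym|x _] //; rewrite !hornerE ?mulr0 ?add0r.
by rewrite prod_w c1 polyC1 mul1r.
Qed.

Lemma enumerationN_exists_gt0 : exists S, enumerationN S.
Proof.
have [w size_w prod_w] := prod_XnaddC_exists.
have uniq_w := prod_XnaddC_uniq size_w prod_w.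
have perm_sol s : s \in permutations w -> size s = N /\ solutionN (rowN s).
  rewrite mem_permutations => s_perm; have size_s : size s = N by rewrite (perm_size s_perm).
  by split=> //; apply: solutionN_rowN size_s _; rewrite (perm_big _ s_perm).
exists (map rowN (permutations w)); split.
- by rewrite size_map size_permutations // size_w.
- by move=> _ /mapP[s /perm_sol[_ sol] ->]; split; last exact: jacobianN_rank.
- move=> i j; rewrite size_map => i_lt j_lt [c _]; rewrite !(nth_map [::]) //.
  have [size_i _] := perm_sol _ (mem_nth [::] i_lt).
  have [size_j _] := perm_sol _ (mem_nth [::] j_lt).
  move/(scale_rowN_inj size_i size_j) => eq_ji.
  by apply/eqP; rewrite -(nth_uniq [::] i_lt j_lt (permutations_uniq w)) eq_ji eqxx.
- move=> v sol; have [s [size_s prod_s] ->] := solutionN_scale_rowN sol.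
  exists (rowN s); last by exists (v 0 ord_max); first exact: solutionN_z_neq0.
  by rewrite map_f // mem_permutations prod_XnaddC_perm.
Qed.
End SystemN.

Lemma enumerationN_exists0 (F : numClosedFieldType) :
  exists S : seq 'rV[F]_1, enumerationN S.
Proof.
exists [:: const_mx 1]; split => //.
- move=> v; rewrite inE => /eqP ->; split; last by apply/eqP; rewrite -leqn0 rank_leq_row.
  split=> [|[]//]; apply/eqP => /rowP/(_ ord0); rewrite !mxE; exact/eqP/oner_neq0.
- by move=> [|i] [|j].
- move=> v [v_neq0 _]; exists (const_mx 1); rewrite ?inE //; exists (v 0 0).
    by apply: contra v_neq0 => /eqP v0; apply/eqP/rowP => j; rewrite ord1 v0 mxE.
  by apply/rowP => j; rewrite !mxE ord1 mulr1.
Qed.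

Lemma enumerationN_exists (F : numClosedFieldType) N :
  exists S : seq 'rV[F]_N.+1, enumerationN S.
Proof. by case: N => [|N]; [exact: enumerationN_exists0 | exact: enumerationN_exists_gt0]. Qed.

Section Reduction.
Variables (F : numClosedFieldType) (n : nat) (d : 'I_n -> nat).
Implicit Types v : 'rV[F]_(dsum d).+1.

Lemma sysE (k : 'I_(dsum d)) : sys F k = sysN F k.
Proof.
rewrite /sys /sysN /h /ftilde_xt /zvar /z_idx; case: ifP => _.
  by rewrite -(big_block_offset _ d (@varN F (dsum d))).
rewrite coefB coef1 subr0; congr (nth 0 (polyseq _) _).
rewrite /prodN -(big_block_offset _ d (fun m => (@varN F (dsum d) m)%:P * 'X + 1)).
by apply: eq_bigr => i _; rewrite /xt subrK.
Qed.

Lemma is_solutionP v : is_solution v <-> solutionN v.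
Proof.
rewrite /is_solution /solutionN /pt_eval.
by split=> -[v_neq0 eqs]; split=> // k; have := eqs k; rewrite sysE.
Qed.

Lemma jacobianE v : jacobian v = jacobianN v.
Proof. by apply/matrixP => k l; rewrite !mxE sysE. Qed.
End Reduction.

Theorem lemma3p5 (F : numClosedFieldType) (n : nat) (d : 'I_n -> nat)
  (dpos : forall i, (0 < d i)%N) :
  exists S : seq 'rV[F]_((dsum d).+1),
    [/\ size S = (dsum d)`!,
        (forall v, v \in S -> simple_solution v),
        (forall i j : nat, (i < size S)%N -> (j < size S)%N ->
            proportional (nth 0 S i) (nth 0 S j) -> i = j)
      & (forall v, is_solution v -> exists2 w, w \in S & proportional w v)].
Proof.
have [S [size_S simple_S distinct_S complete_S]] := enumerationN_exists F (dsum d).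
exists S; split=> // [v /simple_S[sol full_rank]|v /is_solutionP/complete_S//].
by split; [exact/is_solutionP | rewrite jacobianE].
Qed.
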